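(* For every $\varepsilon>0$, c-REShare$(\varepsilon)$ is a $2(1+\varepsilon)$-asymptotic competitive algorithm when service requests have unlimited duration, i.e., over request sequences in which all requests have $\tau_r=\infty$, $\limsup_{\phi(\mathrm{OPT})\to\infty}\phi(\text{c-REShare}(\varepsilon))/\phi(\mathrm{OPT})\le 2(1+\varepsilon)$.
   Context: Network: an undirected layered graph whose vertices (nodes) are datacenters. A node is at layer $\ell\ge 0$ if its distance in links from the closest leaf is $\ell$ (leaves are at layer $0$); the network has finitely many nodes. Every node can host arbitrarily many virtual machines (VMs). Each VM $b$ runs exactly one VNF $v$ from a finite set $\mathcal V$, has maximum computing capability $\bar\mu>0$ and allocated capability $\mu_b\le\bar\mu$. Each VNF $v$ has computing complexity $\theta_v\in(0,1]$. Requests: requests $r$ arrive online; each has a set $\mathcal V_r\subseteq\mathcal V$ of VNFs, arrival time $a_r$, duration $\tau_r$, traffic load $\lambda_r\ge\lambda_{\min}$ where $\lambda_{\min}=\inf_r\lambda_r>0$ is known in advance, end-to-end delay target $D_r$, and an arrival leaf. For $v\in\mathcal V_r$, $(r,v)$ is a job. For a VM $b$ running $v$, $\Lambda(b)$ is the total load of jobs on $b$, and each job on $b$ experiences processing latency $1/(\mu_b-\theta_v\Lambda(b))$. Forwarding latency from a leaf to layer $\ell$ is $d_\ell$, with $d_{\ell+1}>d_\ell$. The latency of $r$ is the maximum of $d_\ell$ over layers hosting its jobs plus the sum of processing latencies of its jobs. Fair delay allocation: $M_{r,v}=1/(\bar\mu-\theta_v\lambda_r)$; $\ell^*(r)$ is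 the highest layer $\ell$ with $d_\ell+\sum_{v\in\mathcal V_r}M_{r,v}\le D_r$ (assumed to exist); $D_r^v=\frac{M_{r,v}}{\sum_{u\in\mathcal V_r}M_{r,u}}(D_r-d_{\ell^*(r)})$. A deployment of $r$ is feasible if each job $(r,v)$ is on a VM $b$ running $v$ with $\mu_b\le\bar\mu$ and $1/(\mu_b-\theta_v\Lambda(b))\le D_r^v$, and the latency of $r$ is at most $D_r$. Cost: a VM $b$ at a node of layer $\ell$ hosting at least one job costs $\kappa_f^\ell+\kappa_p^\ell\mu_b$, with $\kappa_f^{\ell+1}<\kappa_f^\ell$, $\kappa_p^{\ell+1}<\kappa_p^\ell$. For an algorithm $A$, $\phi(A)$ is the total cost of the VMs it uses at the end of the request sequence. OPT is a minimum-cost feasible deployment of all requests computed with full knowledge of the sequence. Latency ranges: for $\varepsilon>0$, $L_0=[\frac{1}{\bar\mu-\lambda_{\min}},\frac{1}{\bar\mu-\lambda_{\min}(1+\varepsilon)}]$, $L_j=(\frac{1}{\bar\mu-\lambda_{\min}(1+\varepsilon)^j},\frac{1}{\bar\mu-\lambda_{\min}(1+\varepsilon)^{j+1}}]$ for $j\ge1$ (indices with $\lambda_{\min}(1+\varepsilon)^{j+1}<\bar\mu$); job $(r,v)$ is associated with $L_j$ if $D_r^v\in L_j$ (every fair delay allocation is presumed to lie in some range). Algorithm c-REShare$(\varepsilon)$: on arrival of $r$, compute $\ell^*(r)$ and choose a node $i^*$ at layer $\ell^*(r)$. For each $v\in\mathcal V_r$, with $j$ such that $D_r^v\in L_j$: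 a VM $b$ in $i^*$ running $v$ and hosting jobs associated with $L_j$ is viable if $\frac{1}{\bar\mu-\theta_v(\Lambda(b)+\lambda_r)}\le D_r^v$ and $\frac{1}{\bar\mu-\theta_v(\Lambda(b)+\lambda_r)}\le D_{r'}^v$ for every job $(r',v)$ already on $b$. If viable VMs exist, $(r,v)$ is placed on the viable VM with the largest $\Lambda(b)$, whose capability is set to $\theta_v\Lambda(b)+1/\min_{(r',v)\in b}D_{r'}^v$ (including the new job); otherwise a new VM running $v$ is opened in $i^*$ with capability $\theta_v\lambda_r+1/D_r^v$ and $(r,v)$ is placed on it. Asymptotic competitiveness: an algorithm $A$ is $c$-asymptotic competitive over a class of request sequences if $\limsup \phi(A)/\phi(\mathrm{OPT})\le c$ as $\phi(\mathrm{OPT})\to\infty$ over that class. *)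

From HB Require Import structures.
From mathcomp Require Import all_boot all_order all_algebra.
From mathcomp Require Import reals.
Set Implicit Arguments. Unset Strict Implicit. Unset Printing Implicit Defensive.
Import Order.TTheory GRing.Theory Num.Theory.
Local Open Scope ring_scope.

Record Model (R : realType) (Node VNF : finType) := mkModel {
  layer : Node -> nat;          (* layer of a node (distance to closest leaf) *)
  theta : VNF -> R;             (* computing complexity theta_v *)
  mubar : R;                    (* maximum computing capability of a VM *)
  lmin  : R;                    (* lambda_min, known lower bound on loads *)
  dfw   : nat -> R;             (* forwarding latency d_l from a leaf to layer l *)
  kf    : nat -> R;             (* fixed VM cost kappa_f^l *)
  kp    : nat -> R              (* proportional VM cost kappa_p^l *)
}.

(* A service request. [rdur = None] encodes an unlimited duration. *)
Record Request (R : realType) (Node VNF : finType) := mkRequest {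
  rV    : {set VNF};
  rlam  : R;           (* traffic load lambda_r *)
  rD    : R;           (* end-to-end delay target D_r *)
  rleaf : Node;        (* arrival leaf *)
  rarr  : R;           (* arrival time a_r *)
  rdur  : option R
}.

(* A VM of the online algorithm: node, VNF it runs, the latency range index
   of the jobs it hosts, hosted jobs (load lambda_r, delay allocation D_r^v),
   and allocated capability mu_b. *)
Record VM (R : realType) (Node VNF : finType) := mkVM {
  vnode  : Node;
  vvnf   : VNF;
  vrange : nat;
  vjobs  : seq (R * R);
  vcap   : R
}.

(* A (static) deployment, used for OPT: VMs are indexed by nat,
   [dnum] of them; job (k,v) (k-th request, VNF v) is placed on VM [dasg k v]. *)
Record Deployment (R : realType) (Node VNF : finType) := mkDep {
  dnum  : nat;
  dnode : nat -> Node;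
  dvnf  : nat -> VNF;
  dcap  : nat -> R;
  dasg  : nat -> VNF -> nat
}.

Section CREShare.
Variables (R : realType) (Node VNF : finType).
Variable M : Model R Node VNF.
Variable eps : R.

Local Notation Req := (Request R Node VNF).
Local Notation VMt := (VM R Node VNF).
Local Notation Dep := (Deployment R Node VNF).

Definition Mrv (r : Req) (v : VNF) : R := 1 / (mubar M - theta M v * rlam r).
Definition sumM (r : Req) : R := \sum_(v in rV r) Mrv r v.
Definition lstar_cond (r : Req) (l : nat) : bool := dfw M l + sumM r <= rD r.
Definition is_lstar (r : Req) (l : nat) : Prop :=
  [/\ exists i : Node, layer M i = l, lstar_cond r l &
      forall i : Node, lstar_cond r (layer M i) -> (layer M i <= l)%N].
Definition Drv (r : Req) (v : VNF) (l : nat) : R :=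
  Mrv r v / sumM r * (rD r - dfw M l).

Definition range_valid (j : nat) : bool := lmin M * (1 + eps) ^+ j.+1 < mubar M.
Definition inL (j : nat) (x : R) : bool :=
  if j == 0%N then
    (1 / (mubar M - lmin M) <= x) && (x <= 1 / (mubar M - lmin M * (1 + eps)))
  else
    (1 / (mubar M - lmin M * (1 + eps) ^+ j) < x)
    && (x <= 1 / (mubar M - lmin M * (1 + eps) ^+ j.+1)).

Definition load (b : VMt) : R := \sum_(p <- vjobs b) p.1.
Definition lat_after (b : VMt) (v : VNF) (lam : R) : R :=
  1 / (mubar M - theta M v * (load b + lam)).
Definition viable (i : Node) (v : VNF) (j : nat) (lam Dv : R) (b : VMt) : bool :=
  [&& vnode b == i, vvnf b == v, vrange b == j,
      0 < mubar M - theta M v * (load b + lam),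
      lat_after b v lam <= Dv &
      all (fun p => lat_after b v lam <= p.2) (vjobs b)].
Definition add_job (b : VMt) (v : VNF) (lam Dv : R) : VMt :=
  mkVM (vnode b) (vvnf b) (vrange b) ((lam, Dv) :: vjobs b)
       (theta M v * (load b + lam) + 1 / foldr Num.min Dv (map snd (vjobs b))).

(* One job placement step (relational: ties among viable VMs with the
   largest load may be broken arbitrarily). *)
Definition place_job (i : Node) (v : VNF) (j : nat) (lam Dv : R)
    (s s' : seq VMt) : Prop :=
  (exists s1 b s2,
      [/\ s = s1 ++ b :: s2, viable i v j lam Dv b,
          all (fun b' => viable i v j lam Dv b' ==> (load b' <= load b)) s &
          s' = s1 ++ add_job b v lam Dv :: s2])
  \/ (~~ has (viable i v j lam Dv) s /\
      s' = rcons s (mkVM i v j [:: (lam, Dv)] (theta M v * lam + 1 / Dv))).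

Fixpoint place_all (i : Node) (r : Req) (l : nat) (vs : seq VNF)
    (s s' : seq VMt) : Prop :=
  match vs with
  | [::] => s' = s
  | v :: vs' => exists s1 j,
      [/\ range_valid j, inL j (Drv r v l),
          place_job i v j (rlam r) (Drv r v l) s s1 &
          place_all i r l vs' s1 s']
  end.

(* [run rs s]: s is a possible final VM configuration of c-REShare(eps)
   after processing the requests rs in order (any choice of the node i* at
   layer l*(r); no departures since durations are unlimited). *)
Inductive run : seq Req -> seq VMt -> Prop :=
| run_nil : run [::] [::]
| run_step rs s r l i s' :
    run rs s -> is_lstar r l -> layer M i = l ->
    place_all i r l (enum (rV r)) s s' -> run (rcons rs r) s'.

Definition alg_cost (s : seq VMt) : R :=
  \sum_(b <- s) (kf M (layer M (vnode b)) + kp M (layer M (vnode b)) * vcap b).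

Definition req (rs : seq Req) (k : 'I_(size rs)) : Req := tnth (in_tuple rs) k.

Definition hosts (rs : seq Req) (D : Dep) (b : nat) : bool :=
  [exists k : 'I_(size rs), [exists v in rV (req k), dasg D k v == b]].

Definition dload (rs : seq Req) (D : Dep) (b : nat) : R :=
  \sum_(k < size rs) \sum_(v in rV (req k) | dasg D k v == b) rlam (req k).

Definition proc_lat (rs : seq Req) (D : Dep) (b : nat) (v : VNF) : R :=
  1 / (dcap D b - theta M v * dload rs D b).

Definition dep_cost (rs : seq Req) (D : Dep) : R :=
  \sum_(b < dnum D | hosts rs D b)
     (kf M (layer M (dnode D b)) + kp M (layer M (dnode D b)) * dcap D b).

Definition feasible (rs : seq Req) (D : Dep) : Prop :=
  forall k : 'I_(size rs),
    (forall v, v \in rV (req k) ->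
       [/\ (dasg D k v < dnum D)%N,
           dvnf D (dasg D k v) = v,
           dcap D (dasg D k v) <= mubar M,
           theta M v * dload rs D (dasg D k v) < dcap D (dasg D k v) &
           forall l, is_lstar (req k) l ->
             proc_lat rs D (dasg D k v) v <= Drv (req k) v l])
    /\ \big[Num.max/0]_(v in rV (req k)) dfw M (layer M (dnode D (dasg D k v)))
       + \sum_(v in rV (req k)) proc_lat rs D (dasg D k v) v <= rD (req k).

Definition is_opt_cost (rs : seq Req) (c : R) : Prop :=
  (forall D, feasible rs D -> c <= dep_cost rs D) /\
  (forall c', (forall D, feasible rs D -> c' <= dep_cost rs D) -> c' <= c).

Definition valid_request (r : Req) : Prop :=
  [/\ rdur r = None /\ lmin M <= rlam r,
      layer M (rleaf r) = 0%N,
      (forall v, v \in rV r -> theta M v * rlam r < mubar M),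
      (exists l, is_lstar r l) &
      (forall v l, v \in rV r -> is_lstar r l ->
         exists j, range_valid j /\ inL j (Drv r v l))].

Definition valid_seq (rs : seq Req) : Prop :=
  sorted (fun a b : Req => rarr a <= rarr b) rs /\
  forall k : 'I_(size rs), valid_request (req k).

Definition model_ok : Prop :=
  [/\ 0 < mubar M /\ 0 < lmin M,
      (forall v, 0 < theta M v <= 1),
      (forall i j : Node, (layer M i < layer M j)%N ->
         [/\ dfw M (layer M i) < dfw M (layer M j),
             kf M (layer M j) < kf M (layer M i) &
             kp M (layer M j) < kp M (layer M i)]),
      (forall i : Node, 0 <= dfw M (layer M i)) &
      (forall i : Node, 0 < kf M (layer M i) /\ 0 < kp M (layer M i))].

End CREShare.

From HB Require Import structures.
From mathcomp Require Import all_boot all_order all_algebra.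
From mathcomp Require Import reals.
From mathcomp Require Import lra ring.
Set Implicit Arguments. Unset Strict Implicit. Unset Printing Implicit Defensive.
Import Order.TTheory GRing.Theory Num.Theory.
Local Open Scope ring_scope.

(* A charging argument.  A job of load lam for VNF v, placed at layer l with
   delay allocation D, is charged theta_v lam C_l / (mu - 1/D), where C_l is the
   cost of a VM of full capability mu at layer l.
   OPT pays at least the total charge: a VM b of OPT meeting the delay D of each
   of its jobs has theta Lambda(b) + mu - mu_b <= mu - 1/D, it lies at a layer
   at most l*(r), so that its own C is at least C_(l*(r)), and
   theta Lambda C / (theta Lambda + mu - mu_b) <= kf + kp mu_b.
   c-REShare pays at most 2(1+eps) times the charge plus a constant, which is
   below delta phi(OPT) once phi(OPT) is large: a VM in range L_j collects at
   least theta Lambda C / (lambda_min (1+eps)^(j+1)), which covers 1/(2(1+eps))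
   of its cost once theta Lambda exceeds half of lambda_min (1+eps)^j.  A new VM
   is opened only when no VM with the same node, VNF and range can absorb the
   job, so two VMs of such a group are never both below half; the remaining VMs
   are at most one per group, and there are finitely many groups. *)

Lemma pairwise_replace (T : Type) (r : rel T) s1 s2 x y :
  (forall z, r z x -> r z y) -> (forall z, r x z -> r y z) ->
  pairwise r (s1 ++ x :: s2) -> pairwise r (s1 ++ y :: s2).
Proof.
move=> h1 h2; rewrite !pairwise_cat !pairwise_cons !allrel_consr.
case/and3P=> /andP[a1 a2] a3 /andP[a4 a5].
by rewrite a2 a3 a5 (sub_all h1 a1) (sub_all h2 a4).
Qed.

Section RealFacts.
Variable R : realFieldType.
Implicit Types a x y : R.

Lemma ler_bernoulli x n : 0 <= x -> 1 + n%:R * x <= (1 + x) ^+ n.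
Proof.
move=> x0; elim: n => [|n IH]; first by rewrite expr0 mul0r addr0.
have h1 : (1 + x) * (1 + n%:R * x) <= (1 + x) * (1 + x) ^+ n.
  by rewrite ler_wpM2l // addr_ge0.
have h2 : 0 <= n%:R * x * x by rewrite !mulr_ge0.
rewrite exprS -natr1; lra.
Qed.

Lemma ler_wpdiv2l a x y : 0 <= a -> 0 < x -> x <= y -> a / y <= a / x.
Proof.
move=> a0 x0 xy; rewrite ler_wpM2l // lef_pV2 ?posrE //; exact: lt_le_trans xy.
Qed.

Lemma inv_sub_le (m t D : R) : 0 < D -> t <= m - 1 / D -> 1 / (m - t) <= D.
Proof.
move=> D0 tD; have m0 : 0 < m - t by have := divr_gt0 ltr01 D0; lra.
by rewrite !div1r invf_ple ?posrE //; lra.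
Qed.

Lemma affine_cost_ge (kf kp T cap mu : R) : 0 <= kf -> 0 <= kp ->
  0 < T -> T <= cap -> cap <= mu ->
  T * (kf + kp * mu) / (T + mu - cap) <= kf + kp * cap.
Proof.
move=> kf0 kp0 T0 Tcap capmu; rewrite ler_pdivrMr; last by lra.
have h1 : 0 <= kf * (mu - cap) by rewrite mulr_ge0 ?subr_ge0.
have h2 : 0 <= kp * ((mu - cap) * (cap - T)) by rewrite !mulr_ge0 ?subr_ge0.
lra.
Qed.

Lemma le_foldr_min (z x : R) (s : seq R) :
  z <= x -> all (fun y => z <= y) s -> z <= foldr Num.min x s.
Proof. by move=> zx; elim: s => //= y s IH /andP[zy /IH]; rewrite le_min zy. Qed.

End RealFacts.

Section CREShareAnalysis.
Variables (R : realType) (Node VNF : finType).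
Variables (M : Model R Node VNF) (eps : R).
Hypothesis model_okM : model_ok M.
Hypothesis eps_gt0 : 0 < eps.

Local Notation mu := (mubar M).
Local Notation lm := (lmin M).
Local Notation VMt := (VM R Node VNF).
Local Notation Req := (Request R Node VNF).
Local Notation Dep := (Deployment R Node VNF).

Lemma mubar_gt0 : 0 < mu. Proof. by case: model_okM => [[]]. Qed.
Lemma lmin_gt0 : 0 < lm. Proof. by case: model_okM => [[]]. Qed.
Lemma theta_gt0 v : 0 < theta M v.
Proof. by case: model_okM => _ /(_ v) /andP[]. Qed.
Lemma kf_gt0 i : 0 < kf M (layer M i).
Proof. by case: model_okM => _ _ _ _ /(_ i) []. Qed.
Lemma kp_gt0 i : 0 < kp M (layer M i).
Proof. by case: model_okM => _ _ _ _ /(_ i) []. Qed.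

(* L_j = (1 / (mu - thr j), 1 / (mu - thr j.+1)], and [slack D] is the largest
   theta_v Lambda(b) whose latency 1 / (mu - theta_v Lambda(b)) is at most D. *)
Definition thr (j : nat) : R := lm * (1 + eps) ^+ j.
Definition slack (D : R) : R := mu - 1 / D.
Definition nranges : nat := Num.Def.archi_bound (mu / (lm * eps)).

Lemma thr_gt0 j : 0 < thr j.
Proof. by rewrite mulr_gt0 ?lmin_gt0 // exprn_gt0 // ltr_wpDr // ltW. Qed.

Lemma thrS j : thr j.+1 = thr j * (1 + eps).
Proof. by rewrite /thr exprSr mulrA. Qed.

Lemma thr_le_thrS j : thr j <= thr j.+1.
Proof. by rewrite thrS ler_peMr ?(ltW (thr_gt0 j)) // lerDl ltW. Qed.

Lemma inL_slack j D : range_valid M eps j -> inL M eps j D ->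
  [/\ 0 < D, thr j <= slack D & slack D <= thr j.+1].
Proof.
move=> rv hD; have lt_mu : thr j.+1 < mu by [].
have [lo hi] : 1 / (mu - thr j) <= D /\ D <= 1 / (mu - thr j.+1).
  move: hD; rewrite /inL; case: (j) => [|i] /=.
    by rewrite /thr expr0 expr1 mulr1 => /andP[].
  by case/andP=> /ltW.
have le_thr := thr_le_thrS j.
have pos_lo : 0 < mu - thr j by lra.
have pos_hi : 0 < mu - thr j.+1 by lra.
have D0 : 0 < D by apply: lt_le_trans lo; rewrite divr_gt0.
have {}lo : 1 / D <= mu - thr j.
  by move: lo; rewrite !div1r (@invf_ple _ (mu - thr j) D) ?posrE.
have {}hi : mu - thr j.+1 <= 1 / D.
  by move: hi; rewrite !div1r (@invf_pge _ D (mu - thr j.+1)) ?posrE.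
by rewrite /slack; split=> //; lra.
Qed.

Lemma range_valid_lt j : range_valid M eps j -> (j < nranges)%N.
Proof.
move=> rv; have := ler_bernoulli j.+1 (ltW eps_gt0) => hb.
have h1 : lm * (j.+1%:R * eps) < mu.
  apply: le_lt_trans rv; rewrite ler_pM2l ?lmin_gt0 //; lra.
have h2 : j.+1%:R < mu / (lm * eps).
  by rewrite ltr_pdivlMr ?mulr_gt0 ?lmin_gt0 // mulrCA.
have := archi_boundP (ltW (lt_trans (ltr0Sn _ _) h2)).
by move=> /(lt_trans h2); rewrite ltr_nat => /ltnW.
Qed.

Definition full_cost (l : nat) : R := kf M l + kp M l * mu.

Definition charge (v : VNF) (lam D : R) (l : nat) : R :=
  theta M v * lam * full_cost l / slack D.

Definition vm_charge (b : VMt) : R :=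
  \sum_(p <- vjobs b) charge (vvnf b) p.1 p.2 (layer M (vnode b)).

Definition wf_vm (b : VMt) : bool :=
  [&& range_valid M eps (vrange b), vcap b <= mu &
      all (fun p => (lm <= p.1) && inL M eps (vrange b) p.2) (vjobs b)].

Definition group (b : VMt) : Node * VNF * nat := (vnode b, vvnf b, vrange b).

(* A VM is opened only when the earlier VMs of its group cannot take its first
   job, so two VMs of one group always jointly exceed the threshold. *)
Definition group_full (a b : VMt) : bool :=
  (group a == group b) ==> (thr (vrange a) < theta M (vvnf a) * (load a + load b)).

Definition wf_state (s : seq VMt) : bool := all wf_vm s && pairwise group_full s.

Lemma full_cost_gt0 i : 0 < full_cost (layer M i).
Proof. by rewrite addr_gt0 ?kf_gt0 // mulr_gt0 ?kp_gt0 ?mubar_gt0. Qed.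

Lemma full_cost_le (i1 i2 : Node) : (layer M i1 <= layer M i2)%N ->
  full_cost (layer M i2) <= full_cost (layer M i1).
Proof.
rewrite leq_eqVlt => /orP[/eqP -> //|lt12].
case: model_okM => _ _ /(_ i1 i2 lt12) [_ kf_lt kp_lt] _ _.
by rewrite lerD ?ler_pM2r ?mubar_gt0 // ltW.
Qed.

Lemma load_add_job b v lam Dv : load (add_job M b v lam Dv) = lam + load b.
Proof. by rewrite /load big_cons. Qed.

Lemma vm_charge_add_job b v lam Dv : vm_charge (add_job M b v lam Dv) =
  charge (vvnf b) lam Dv (layer M (vnode b)) + vm_charge b.
Proof. by rewrite /vm_charge big_cons. Qed.

Lemma load_ge0 b : wf_vm b -> 0 <= load b.
Proof.
case/and3P=> _ _; rewrite /load; elim: (vjobs b) => [|p js IH] /=.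
  by rewrite big_nil.
case/andP=> /andP[lam_ge _] /IH; rewrite big_cons; apply: addr_ge0.
exact: le_trans (ltW lmin_gt0) lam_ge.
Qed.

Lemma group_full_mono x y : group x = group y -> load x <= load y ->
  (forall z, group_full z x -> group_full z y) /\
  (forall z, group_full x z -> group_full y z).
Proof.
move=> gxy lxy; have [vx vr] : vvnf x = vvnf y /\ vrange x = vrange y by case: gxy.
rewrite /group_full gxy vx vr; split=> z; case: (_ == _) => //= lt;
  apply: lt_le_trans lt _; by rewrite ler_pM2l ?theta_gt0 // ?lerD2l ?lerD2r.
Qed.

Lemma viable_of_fits b i v j lam Dv : wf_vm b -> group b = (i, v, j) ->
  inL M eps j Dv -> theta M v * (load b + lam) <= thr j ->
  viable M i v j lam Dv b.
Proof.
move=> wfb gb hDv fits.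
have [ei ev ej] : [/\ vnode b = i, vvnf b = v & vrange b = j] by case: gb.
case/and3P: wfb; rewrite ej => rv _ jobs_ok.
have lat_le D : inL M eps j D -> lat_after M b v lam <= D.
  move=> hD; have [D0 thrD _] := inL_slack rv hD.
  exact: inv_sub_le D0 (le_trans fits thrD).
have [D0 thrD _] := inL_slack rv hDv.
have pos : 0 < mu - theta M v * (load b + lam).
  by have := divr_gt0 ltr01 D0; rewrite /slack in thrD; lra.
rewrite /viable ei ev ej !eqxx pos lat_le //=.
by apply: sub_all jobs_ok => p /andP[_ /lat_le].
Qed.

Lemma add_job_cap_le b i v j lam Dv :
  viable M i v j lam Dv b -> vcap (add_job M b v lam Dv) <= mu.
Proof.
case/and5P=> _ _ _ pos /andP[latD lat_jobs] /=.
set t := theta M v * (load b + lam) in pos latD lat_jobs *.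
set m := foldr _ _ _.
have lat_m : 1 / (mu - t) <= m by apply: le_foldr_min; rewrite // all_map.
have m0 : 0 < m by apply: lt_le_trans lat_m; rewrite divr_gt0.
by move: lat_m; rewrite !div1r (@invf_ple _ (mu - t) m) ?posrE // -div1r; lra.
Qed.

Lemma place_on_viable_wf s1 b s2 i v j lam Dv : lm <= lam ->
  inL M eps j Dv -> viable M i v j lam Dv b -> wf_state (s1 ++ b :: s2) ->
  wf_state (s1 ++ add_job M b v lam Dv :: s2).
Proof.
move=> lam_ge hDv vb /andP[]; rewrite !all_cat /= => /and3P[wf1 wfb wf2] pw.
have [_ _ /eqP ej _ _] := and5P vb.
have wfb' : wf_vm (add_job M b v lam Dv).
  case/and3P: wfb => rv _ jobs_ok.
  by rewrite /wf_vm /= rv (add_job_cap_le vb) lam_ge jobs_ok ej hDv.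
have load_le : load b <= load (add_job M b v lam Dv).
  by rewrite load_add_job lerDr (le_trans (ltW lmin_gt0) lam_ge).
have [mono_r mono_l] := @group_full_mono b (add_job M b v lam Dv) erefl load_le.
by rewrite /wf_state !all_cat /= wf1 wfb' wf2 (pairwise_replace mono_r mono_l pw).
Qed.

Lemma open_vm_wf s i v j lam Dv : lm <= lam -> range_valid M eps j ->
  inL M eps j Dv -> theta M v * lam + 1 / Dv <= mu ->
  wf_state s -> ~~ has (viable M i v j lam Dv) s ->
  wf_state (rcons s (mkVM i v j [:: (lam, Dv)] (theta M v * lam + 1 / Dv))).
Proof.
move=> lam_ge rv hDv cap_le /andP[wfs pw] none.
set nb := mkVM _ _ _ _ _.
have load_nb : load nb = lam by rewrite /load /= big_cons big_nil addr0.
rewrite /wf_state all_rcons pairwise_rcons wfs pw /= /wf_vm /= rv cap_le lam_ge hDv.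
rewrite /= !andbT; have : all (predI wf_vm (predC (viable M i v j lam Dv))) s.
  by rewrite all_predI wfs all_predC none.
apply: sub_all => b /andP[wfb /negP not_viable]; apply/implyP => /eqP gb.
have [ev ej] : vvnf b = v /\ vrange b = j by case: gb.
rewrite load_nb ev ej ltNge; apply/negP => fits.
exact/not_viable/viable_of_fits.
Qed.

Lemma place_job_wf i v j lam Dv s s' : lm <= lam -> range_valid M eps j ->
  inL M eps j Dv -> theta M v * lam + 1 / Dv <= mu ->
  wf_state s -> place_job M i v j lam Dv s s' ->
  wf_state s' /\
  \sum_(b <- s') vm_charge b = \sum_(b <- s) vm_charge b + charge v lam Dv (layer M i).
Proof.
move=> lam_ge rv hDv cap_le wfs [[s1 [b [s2 [Es vb _ ->]]]]|[none ->]].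
  subst s; split; first exact: place_on_viable_wf lam_ge hDv vb wfs.
  have [/eqP ei /eqP ev _] := and3P vb.
  by rewrite !big_cat !big_cons /= vm_charge_add_job ev ei; ring.
split; first exact: open_vm_wf lam_ge rv hDv cap_le wfs none.
by rewrite -cats1 big_cat big_seq1 /vm_charge /= big_seq1.
Qed.

Definition lstar (r : Req) : nat :=
  (\max_(i : Node | lstar_cond M r (layer M i)) layer M i)%N.

Lemma is_lstar_eq r l : is_lstar M r l -> l = lstar r.
Proof.
case=> [[i <-] cond_i max_i]; apply/eqP; rewrite eqn_leq; apply/andP; split.
  exact: leq_bigmax_cond.
by apply/bigmax_leqP => i' /max_i.
Qed.

Definition req_charge (r : Req) : R :=
  \sum_(v in rV r) charge v (rlam r) (Drv M r v (lstar r)) (lstar r).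

Lemma Mrv_gt0 r v : theta M v * rlam r < mu -> 0 < Mrv M r v.
Proof. by move=> h; rewrite divr_gt0 // subr_gt0. Qed.

Lemma Mrv_le_Drv r l v : valid_request M eps r -> is_lstar M r l -> v \in rV r ->
  Mrv M r v <= Drv M r v l.
Proof.
case=> _ _ th_lt _ _ [_ cond _] hv.
have M_gt0 u : u \in rV r -> 0 < Mrv M r u by move/th_lt/Mrv_gt0.
have Mv_le : Mrv M r v <= sumM M r.
  rewrite /sumM (bigD1 v) //= lerDl sumr_ge0 // => u /andP[hu _].
  exact: ltW (M_gt0 u hu).
have sum_gt0 : 0 < sumM M r by apply: lt_le_trans Mv_le; apply: M_gt0.
have sum_le : sumM M r <= rD r - dfw M l by move: cond; rewrite /lstar_cond; lra.
rewrite /Drv -{1}(divfK (lt0r_neq0 sum_gt0) (Mrv M r v)) ler_wpM2l //.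
by rewrite divr_ge0 // ltW ?M_gt0.
Qed.

Lemma Drv_fits r l v : valid_request M eps r -> is_lstar M r l -> v \in rV r ->
  theta M v * rlam r + 1 / Drv M r v l <= mu.
Proof.
move=> vr hl hv; have M_le := Mrv_le_Drv vr hl hv.
have [_ _ th_lt _ _] := vr; have M_gt0 := Mrv_gt0 (th_lt v hv).
by have := ler_wpdiv2l ler01 M_gt0 M_le; rewrite /Mrv div1r invrK; lra.
Qed.

Lemma place_all_wf i r l vs s s' : valid_request M eps r -> is_lstar M r l ->
  layer M i = l -> {subset vs <= rV r} -> wf_state s ->
  place_all M eps i r l vs s s' ->
  wf_state s' /\ \sum_(b <- s') vm_charge b =
    \sum_(b <- s) vm_charge b + \sum_(v <- vs) charge v (rlam r) (Drv M r v l) l.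
Proof.
move=> vr hl ei; subst l; elim: vs s => [|v vs IH] s sub wfs /=.
  by move=> ->; rewrite big_nil addr0.
case=> s1 [j [rv hD pj pa]].
have hv : v \in rV r by apply: sub; rewrite mem_head.
have sub' : {subset vs <= rV r} by move=> u hu; apply: sub; rewrite in_cons hu orbT.
have [[_ lam_ge] _ _ _ _] := vr.
have [wfs1 sum1] := place_job_wf lam_ge rv hD (Drv_fits vr hl hv) wfs pj.
have [wfs' sum'] := IH s1 sub' wfs1 pa.
by rewrite sum' sum1 big_cons addrA.
Qed.

Lemma run_wf rs s : run M eps rs s ->
  (forall x0 n, (n < size rs)%N -> valid_request M eps (nth x0 rs n)) ->
  wf_state s /\ \sum_(b <- s) vm_charge b = \sum_(r <- rs) req_charge r.
Proof.
elim=> [|rs0 s0 r l i s' _ IH hl ei pa] valid; first by rewrite !big_nil.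
have valid0 x0 n : (n < size rs0)%N -> valid_request M eps (nth x0 rs0 n).
  move=> lt_n; have := valid x0 n; rewrite size_rcons nth_rcons lt_n; apply.
  exact: leqW.
have vr : valid_request M eps r.
  by have := valid r (size rs0); rewrite size_rcons nth_rcons ltnn eqxx; apply.
have [wfs0 sum0] := IH valid0.
have sub : {subset enum (rV r) <= rV r} by move=> v; rewrite mem_enum.
have [wfs' sum'] := place_all_wf vr hl ei sub wfs0 pa.
split=> //; rewrite sum' sum0 -cats1 big_cat big_seq1 /req_charge big_enum /=.
by rewrite -(is_lstar_eq hl).
Qed.

Definition light (b : VMt) : bool := 2 * (theta M (vvnf b) * load b) <= thr (vrange b).

Definition full_cost_sum : R := \sum_(i : Node) full_cost (layer M i).
Definition light_budget : R := full_cost_sum * (#|Node| * #|VNF| * nranges.+1)%N%:R.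

Lemma full_cost_le_sum i : full_cost (layer M i) <= full_cost_sum.
Proof.
rewrite /full_cost_sum (bigD1 i) //= lerDl sumr_ge0 // => k _.
exact: ltW (full_cost_gt0 k).
Qed.

Lemma full_cost_sum_ge0 : 0 <= full_cost_sum.
Proof. by rewrite sumr_ge0 // => i _; apply: ltW (full_cost_gt0 i). Qed.

Lemma vm_charge_ge b : wf_vm b ->
  theta M (vvnf b) * load b * full_cost (layer M (vnode b)) / thr (vrange b).+1
    <= vm_charge b.
Proof.
case/and3P=> rv _ /allP jobs_ok.
rewrite /vm_charge /load mulr_sumr !mulr_suml big_seq [leRHS]big_seq.
apply: ler_sum => p /jobs_ok /andP[lam_ge hD].
have [_ thr_le le_thr] := inL_slack rv hD.
apply: ler_wpdiv2l le_thr; last exact: lt_le_trans (thr_gt0 _) thr_le.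
rewrite !mulr_ge0 ?(ltW (theta_gt0 _)) ?(ltW (full_cost_gt0 _)) //.
exact: le_trans (ltW lmin_gt0) lam_ge.
Qed.

Lemma vm_cost_le b : wf_vm b ->
  kf M (layer M (vnode b)) + kp M (layer M (vnode b)) * vcap b <=
  2 * (1 + eps) * vm_charge b + (if light b then full_cost_sum else 0).
Proof.
move=> wfb; have charge_ge := vm_charge_ge wfb.
have [_ cap_le _] := and3P wfb.
set C := full_cost (layer M (vnode b)) in charge_ge *.
have C_gt0 : 0 < C by apply: full_cost_gt0.
have cost_le : kf M (layer M (vnode b)) + kp M (layer M (vnode b)) * vcap b <= C.
  by rewrite lerD2l ler_wpM2l // ltW // kp_gt0.
set t := theta M (vvnf b) * load b in charge_ge *.
have t_ge0 : 0 <= t by rewrite mulr_ge0 ?(ltW (theta_gt0 _)) ?load_ge0.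
have thrb_gt0 := thr_gt0 (vrange b).
have eps1_gt0 : 0 < 1 + eps by rewrite addr_gt0.
have charge_ge0 : 0 <= vm_charge b.
  apply: le_trans charge_ge; apply: divr_ge0; last exact: ltW (thr_gt0 _).
  by rewrite mulr_ge0 // ltW.
rewrite /light -/t; case: ifP => [_|heavy].
  have := full_cost_le_sum (vnode b); rewrite -/C.
  have : 0 <= 2 * (1 + eps) * vm_charge b by rewrite !mulr_ge0 // ltW.
  lra.
have half_full : thr (vrange b) < 2 * t by rewrite ltNge heavy.
have scale : 2 * (1 + eps) * (t * C / thr (vrange b).+1) = 2 * t * C / thr (vrange b).
  by rewrite thrS; field; rewrite !lt0r_neq0.
have C_le : C <= 2 * (1 + eps) * (t * C / thr (vrange b).+1).
  by rewrite scale ler_pdivlMr // [C * _]mulrC ler_pM2r // ltW.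
have : 2 * (1 + eps) * (t * C / thr (vrange b).+1) <= 2 * (1 + eps) * vm_charge b.
  by rewrite ler_pM2l ?mulr_gt0.
lra.
Qed.

Definition group_index (b : VMt) : Node * VNF * 'I_nranges.+1 :=
  (vnode b, vvnf b, inord (vrange b)).

Lemma count_light s : wf_state s -> (count light s <= #|Node| * #|VNF| * nranges.+1)%N.
Proof.
case/andP=> wfs pw; rewrite -size_filter.
have uniq_idx : uniq (map group_index (filter light s)).
  rewrite uniq_pairwise pairwise_map.
  apply: (@sub_in_pairwise _ [pred b | wf_vm b && light b] group_full).
  - move=> a b /andP[wfa la] /andP[wfb lb] fab; apply/eqP => -[en ev er].
    have lt_ranges c : wf_vm c -> (vrange c < nranges.+1)%N.
      by case/and3P=> rv _ _; rewrite ltnS ltnW ?range_valid_lt.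
    move/(congr1 val): er; rewrite /= !inordK ?lt_ranges // => er.
    move: fab la lb; rewrite /group_full /group /light en ev er eqxx /= mulrDr.
    lra.
  - by rewrite all_filter; apply: sub_all wfs => b wfb; apply/implyP => lb; apply/andP.
  - exact: pairwise_filter.
rewrite -(size_map group_index) -(card_uniqP uniq_idx).
by apply: leq_trans (max_card _) _; rewrite !card_prod card_ord.
Qed.

Lemma alg_cost_le s : wf_state s ->
  alg_cost M s <= 2 * (1 + eps) * \sum_(b <- s) vm_charge b + light_budget.
Proof.
move=> wfst; have [wfs _] := andP wfst.
have cost_le : alg_cost M s <=
    2 * (1 + eps) * \sum_(b <- s) vm_charge b + full_cost_sum * (count light s)%:R.
  rewrite /alg_cost mulr_sumr; elim: s wfs {wfst} => [|b s IH] /=.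
    by rewrite !big_nil mulr0 addr0.
  case/andP=> /vm_cost_le cost_b /IH; rewrite !big_cons natrD mulrDr.
  by case: (light b) cost_b; rewrite ?mulr1 ?mulr0 /=; lra.
apply: le_trans cost_le _; rewrite lerD2l ler_wpM2l ?full_cost_sum_ge0 //.
by rewrite ler_nat count_light.
Qed.

Section OptLowerBound.
Variables (rs : seq Req) (D : Dep).
Hypothesis valid_rs : forall k : 'I_(size rs), valid_request M eps (req k).
Hypothesis feasD : feasible M rs D.
Implicit Type k : 'I_(size rs).

Lemma rlam_gt0 k : 0 < rlam (req k).
Proof.
by have [[_ lam_ge] _ _ _ _] := valid_rs k; apply: lt_le_trans lmin_gt0 lam_ge.
Qed.

Lemma lstar_spec k : is_lstar M (req k) (lstar (req k)).
Proof. by have [_ _ _ [l hl] _] := valid_rs k; rewrite -(is_lstar_eq hl). Qed.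

Lemma rlam_le_dload k v : v \in rV (req k) -> rlam (req k) <= dload rs D (dasg D k v).
Proof.
move=> hv; rewrite /dload (bigD1 k) //= (bigD1 v) /=; last by rewrite hv eqxx.
rewrite -addrA lerDl addr_ge0 ?sumr_ge0 // => [u _|k' _]; first exact: ltW (rlam_gt0 k).
by rewrite sumr_ge0 // => u _; apply: ltW (rlam_gt0 k').
Qed.

Lemma Mrv_le_proc_lat k v : v \in rV (req k) ->
  Mrv M (req k) v <= proc_lat M rs D (dasg D k v) v.
Proof.
move=> hv; have [_ _ cap_le load_lt _] := (feasD k).1 v hv.
have := ler_wpM2l (ltW (theta_gt0 v)) (rlam_le_dload hv) => load_le.
by apply: ler_wpdiv2l ler01 _ _; lra.
Qed.

Lemma opt_layer_le_lstar k v : v \in rV (req k) ->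
  (layer M (dnode D (dasg D k v)) <= lstar (req k))%N.
Proof.
move=> hv; have [_ _ max_l] := lstar_spec k; apply: max_l.
have [_ e2e] := feasD k.
have fw_le : dfw M (layer M (dnode D (dasg D k v))) <=
    \big[Num.max/0]_(u in rV (req k)) dfw M (layer M (dnode D (dasg D k u))).
  exact: (le_bigmax_cond _ (fun u => dfw M (layer M (dnode D (dasg D k u)))) hv).
have sum_le : sumM M (req k) <= \sum_(u in rV (req k)) proc_lat M rs D (dasg D k u) u.
  by apply: ler_sum => u; apply: Mrv_le_proc_lat.
by rewrite /lstar_cond; lra.
Qed.

Definition job_charge k v : R :=
  charge v (rlam (req k)) (Drv M (req k) v (lstar (req k))) (lstar (req k)).

Definition opt_rate (b : nat) : R :=
  theta M (dvnf D b) * full_cost (layer M (dnode D b)) /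
    (theta M (dvnf D b) * dload rs D b + mu - dcap D b).

Lemma job_charge_le k v : v \in rV (req k) ->
  job_charge k v <= opt_rate (dasg D k v) * rlam (req k).
Proof.
move=> hv; set b := dasg D k v; set Dv := Drv M (req k) v (lstar (req k)).
have hl := lstar_spec k.
have [_ _ _ _ ranges] := valid_rs k; have [j [rv hD]] := ranges v _ hv hl.
have [D0 _ _] := inL_slack rv hD.
have [_ vnf_b cap_le load_lt lat_le] := (feasD k).1 v hv.
rewrite /opt_rate vnf_b -/b in load_lt lat_le *.
set Z := theta M v * dload rs D b + mu - dcap D b.
have lat_b : 1 / Dv <= dcap D b - theta M v * dload rs D b.
  have := lat_le _ hl; rewrite /proc_lat !div1r.
  by rewrite (@invf_ple _ (dcap D b - theta M v * dload rs D b) Dv) ?posrE ?subr_gt0.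
have Z_le : Z <= slack Dv by rewrite /Z /slack; lra.
have Z_gt0 : 0 < Z.
  have := mulr_gt0 (theta_gt0 v) (lt_le_trans (rlam_gt0 k) (rlam_le_dload hv)).
  by rewrite /Z; lra.
have C_le : full_cost (lstar (req k)) <= full_cost (layer M (dnode D b)).
  have [[i li] _ _] := hl; rewrite -li; apply: full_cost_le.
  by rewrite li opt_layer_le_lstar.
have C_gt0 : 0 < full_cost (lstar (req k)).
  by have [[i <-] _ _] := hl; apply: full_cost_gt0.
have w_gt0 : 0 < theta M v * rlam (req k) by rewrite mulr_gt0 ?theta_gt0 ?rlam_gt0.
apply: le_trans (ler_wpdiv2l _ Z_gt0 Z_le) _; first by rewrite mulr_ge0 ?ltW.
have -> : theta M v * full_cost (layer M (dnode D b)) / Z * rlam (req k) =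
    theta M v * rlam (req k) * full_cost (layer M (dnode D b)) / Z by ring.
apply: ler_wpM2r; first by rewrite invr_ge0 ltW.
by rewrite ler_pM2l.
Qed.

Lemma vm_job_charge_le (b : 'I_(dnum D)) : hosts rs D b ->
  \sum_(k < size rs) \sum_(v in rV (req k) | dasg D k v == b) job_charge k v <=
  kf M (layer M (dnode D b)) + kp M (layer M (dnode D b)) * dcap D b.
Proof.
case/existsP=> k0 /existsP[v0 /andP[hv0 /eqP asg0]].
have [_ vnf_b cap_le load_lt _] := (feasD k0).1 v0 hv0.
rewrite asg0 in vnf_b cap_le load_lt; rewrite -vnf_b in load_lt.
have load_gt0 : 0 < theta M (dvnf D b) * dload rs D b.
  rewrite mulr_gt0 ?theta_gt0 //; apply: lt_le_trans (rlam_gt0 k0) _.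
  by rewrite -asg0 rlam_le_dload.
apply: (@le_trans _ _ (opt_rate b * dload rs D b)).
  rewrite /dload mulr_sumr; apply: ler_sum => k _; rewrite mulr_sumr.
  by apply: ler_sum => v /andP[hv /eqP <-]; apply: job_charge_le.
rewrite /opt_rate; set th := theta M (dvnf D b) in load_lt load_gt0 *.
set dl := dload rs D b in load_lt load_gt0 *.
have -> : th * full_cost (layer M (dnode D b)) / (th * dl + mu - dcap D b) * dl =
    th * dl * full_cost (layer M (dnode D b)) / (th * dl + mu - dcap D b) by ring.
apply: affine_cost_ge => //; last exact: ltW.
  exact: ltW (kf_gt0 _).
exact: ltW (kp_gt0 _).
Qed.

Lemma req_charge_sum_le_dep_cost : \sum_(r <- rs) req_charge r <= dep_cost M rs D.
Proof.
have -> : \sum_(r <- rs) req_charge r =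
    \sum_(b < dnum D) \sum_(k < size rs)
      \sum_(v in rV (req k) | dasg D k v == b) job_charge k v.
  rewrite big_tnth exchange_big /=; apply: eq_bigr => k _.
  rewrite (exchange_big_dep (fun v => v \in rV (req k))) /=; last by move=> ? ? _ /andP[].
  apply: eq_bigr => v hv; have [lt_asg _ _ _ _] := (feasD k).1 v hv.
  rewrite (bigD1 (Ordinal lt_asg)) /=; last by rewrite hv eqxx.
  rewrite big1 ?addr0 // => b /andP[/andP[_ /eqP asg] ne_b].
  by move: ne_b; rewrite -val_eqE /= asg eqxx.
rewrite /dep_cost [leRHS]big_mkcond /=; apply: ler_sum => b _.
case: ifP => [|not_hosts]; first exact: vm_job_charge_le.
rewrite big1 // => k _; rewrite big1 // => v /andP[hv asg].
suff : hosts rs D b by rewrite not_hosts.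
by apply/existsP; exists k; apply/existsP; exists v; rewrite hv.
Qed.

End OptLowerBound.

Lemma alg_cost_le_opt rs s c : valid_seq M eps rs -> run M eps rs s ->
  is_opt_cost M rs c -> alg_cost M s <= 2 * (1 + eps) * c + light_budget.
Proof.
move=> [_ valid] hrun [_ opt_glb].
have valid_nth x0 n : (n < size rs)%N -> valid_request M eps (nth x0 rs n).
  by move=> lt_n; have := valid (Ordinal lt_n); rewrite /req (tnth_nth x0).
have [wfs charge_eq] := run_wf hrun valid_nth.
have charge_le : \sum_(r <- rs) req_charge r <= c.
  by apply: opt_glb => D; apply: req_charge_sum_le_dep_cost.
apply: le_trans (alg_cost_le wfs) _; rewrite charge_eq lerD2r ler_wpM2l //.
by rewrite mulr_ge0 // addr_ge0 // ltW.
Qed.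

End CREShareAnalysis.

Theorem theorem1 (R : realType) (Node VNF : finType) (M : Model R Node VNF)
    (eps : R) :
  model_ok M -> 0 < eps ->
  forall delta : R, 0 < delta ->
  exists K : R, forall (rs : seq (Request R Node VNF)) (s : seq (VM R Node VNF)) (c : R),
    valid_seq M eps rs -> run M eps rs s -> is_opt_cost M rs c -> K <= c ->
    alg_cost M s <= (2 * (1 + eps) + delta) * c.
Proof.
move=> okM eps_gt0 delta delta_gt0; exists (light_budget M eps / delta).
move=> rs s c valid hrun opt; rewrite ler_pdivrMr // => budget_le.
have := alg_cost_le_opt okM eps_gt0 valid hrun opt; lra.
Qed.
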